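(* Let $m\ge2$. The polynomial $G_m(t,\beta)$ (in the variable $t$) satisfies: (i) for $0<\beta<1$ all zeros of $G_m(t,\beta)$ are simple and negative; (ii) for $0<\beta<\frac12$, $G_m(t,\beta)$ has exactly $\lfloor\frac m2\rfloor$ zeros in $|t|<1$ and $\lfloor\frac{m-1}2\rfloor$ zeros in $|t|>1$; (iii) for $\frac12<\beta<1$, $G_m(t,\beta)$ has exactly $\lfloor\frac{m-1}2\rfloor$ zeros in $|t|<1$ and $\lfloor\frac m2\rfloor$ zeros in $|t|>1$.
   Context: $G_1(t,\beta)=-1$ and for $m\ge2$, $G_m(t,\beta)=[\beta(t-1)-(m-1)t]G_{m-1}(t,\beta)+t(t-1)\frac{\partial}{\partial t}G_{m-1}(t,\beta)$; $G_m$ is a polynomial of degree at most $m-1$ in $t$. *)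

From HB Require Import structures.
From mathcomp Require Import all_boot all_order all_algebra.
From mathcomp Require Import reals.
From mathcomp Require Import complex.
Set Implicit Arguments. Unset Strict Implicit. Unset Printing Implicit Defensive.
Import Order.TTheory GRing.Theory Num.Theory.
Local Open Scope ring_scope.

(* Gaux b n = G_{n+1}(t, b) as a polynomial in t:
   G_1 = -1,
   G_m = [b(t-1) - (m-1) t] G_{m-1} + t(t-1) d/dt G_{m-1}. *)
Fixpoint Gaux (R : realType) (b : R) (n : nat) : {poly R} :=
  match n with
  | 0 => -1
  | n'.+1 =>
      (b *: ('X - 1) - (n'.+1)%:R *: 'X) * Gaux b n'
      + ('X * ('X - 1)) * (Gaux b n')^`()
  end.

(* G_m(t, b) for m >= 1 (the value at m = 0 is irrelevant). *)
Definition G (R : realType) (m : nat) (b : R) : {poly R} := Gaux b m.-1.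

Definition GC (R : realType) (m : nat) (b : R) : {poly R[i]} :=
  map_poly (real_complex R) (G m b).

Definition nzeros (C : fieldType) (p : {poly C}) (P : C -> bool) (k : nat) : Prop :=
  exists s : seq C, [/\ uniq s, forall z, (z \in s) = (root p z && P z) & size s = k].

From HB Require Import structures.
From mathcomp Require Import all_boot all_order all_algebra.
From mathcomp Require Import reals.
From mathcomp Require Import complex polyrcf.
From mathcomp Require Import ring lra zify.
Import Order.TTheory GRing.Theory Num.Theory.
Set Implicit Arguments. Unset Strict Implicit. Unset Printing Implicit Defensive.
Local Open Scope ring_scope.

(* At a zero y of G_m the recurrence gives G_(m+1)(y) = y (y - 1) G_m'(y), and
   G_(m+1)(0) = -b G_m(0); so G_(m+1) alternates in sign along the zeros of G_m
   followed by 0, which yields m - 1 interlacing zeros, and the sign of the leading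
   coefficient -(b - 1)^m puts the last zero to the left of all of them.
   Interlacing changes the number of zeros in (-1, 0) by at most one, and its parity
   is read off the sign of G_(m+1)(-1).  As a function of b, G_(n+1)(-1) is
   -(-2)^n E_n(b) for the Euler polynomial E_n, whose sign on (0, 1/2) and (1/2, 1)
   follows from E_n' = n E_(n-1), E_n(1 - x) = (-1)^n E_n(x) and its zeros at 0
   (n even) and 1/2 (n odd). *)

(* [Gpoly b n] is G_(n+1)(t, b) over any commutative ring, so that [b] may itself
   be a polynomial variable (see [Gneg1]). *)
Section Recurrence.
Variable A : comNzRingType.
Implicit Types (b : A) (p : {poly A}).

Fixpoint Gpoly b n : {poly A} :=
  match n with
  | 0 => -1
  | n'.+1 =>
      (b *: ('X - 1) - (n'.+1)%:R *: 'X) * Gpoly b n'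
      + ('X * ('X - 1)) * (Gpoly b n')^`()
  end.

Definition Gstep b n p : {poly A} :=
  ((b - n.+1%:R)%:P * 'X - b%:P) * p + ('X * ('X - 1)) * p^`().

Lemma GpolyS b n : Gpoly b n.+1 = Gstep b n (Gpoly b n).
Proof. by rewrite /= /Gstep -!mul_polyC polyCB; congr (_ * _ + _); ring. Qed.

Lemma coef_Gstep b n p k :
  (Gstep b n p)`_k.+1 = (b - n.+1%:R + k%:R) * p`_k - (b + k.+1%:R) * p`_k.+1.
Proof.
have -> : Gstep b n p = (b - n.+1%:R)%:P * ('X * p) - b%:P * p
    + ('X * ('X * p^`()) - 'X * p^`()) by rewrite /Gstep; ring.
rewrite coefD !coefB !coefCM !coefXM !coef_deriv.
by case: k => [|k] /=; ring.
Qed.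

Lemma Gpoly_size_coef b n :
  (size (Gpoly b n) <= n.+1)%N /\ (Gpoly b n)`_n = - (b - 1) ^+ n.
Proof.
elim: n => [|n [IHs IHc]].
  by rewrite /= size_polyN size_poly1 coefN coef1 expr0.
have G0 j : (n.+1 <= j)%N -> (Gpoly b n)`_j = 0 by move=> ?; apply: (leq_sizeP _ _ IHs).
split; last by rewrite GpolyS coef_Gstep (G0 _ (leqnn _)) IHc exprS; ring.
apply/leq_sizeP => -[//|j] hj.
by rewrite GpolyS coef_Gstep !G0 ?(leq_trans _ hj) //; ring.
Qed.

Lemma Gpoly_shift b n :
  'X * Gpoly (b + 1) n = Gpoly b n - (b ^+ n)%:P * ('X - 1) ^+ n.+1.
Proof.
elim: n => [|n IH]; first by rewrite /= polyC1; ring.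
have E : Gpoly b n = 'X * Gpoly (b + 1) n + (b ^+ n)%:P * ('X - 1) ^+ n.+1.
  by rewrite IH; ring.
rewrite !GpolyS /Gstep E; set g := Gpoly (b + 1) n.
rewrite derivD !derivM derivX derivC mul0r add0r deriv_exp derivB derivX derivC
  subr0 mul1r !polyCB !polyCD !rmorphXn /= -!natr1 !polyCD polyC1 rmorph_nat.
rewrite -[_ *+ n.+1]mulr_natr -natr1 !exprS.
move: (g^`()) (('X - 1) ^+ n) ((b%:P) ^+ n) => h e d; ring.
Qed.

Lemma horner_GpolyS0 b n : (Gpoly b n.+1).[0] = - b * (Gpoly b n).[0].
Proof. by rewrite GpolyS /Gstep !hornerE; ring. Qed.

Lemma horner_GpolyS_root b n y : root (Gpoly b n) y ->
  (Gpoly b n.+1).[y] = y * (y - 1) * (Gpoly b n)^`().[y].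
Proof. by move/eqP=> r; rewrite GpolyS /Gstep !hornerE r; ring. Qed.

End Recurrence.

Lemma map_Gpoly (A B : comNzRingType) (f : {rmorphism A -> B}) (b : A) n :
  map_poly f (Gpoly b n) = Gpoly (f b) n.
Proof.
elim: n => [|n IH] /=; first by rewrite rmorphN rmorph1.
by rewrite rmorphD !rmorphM /= -deriv_map IH rmorphB /= !map_polyZ /= rmorphB
  /= map_polyX rmorph1 rmorph_nat.
Qed.

Lemma Gaux_Gpoly (R : realType) (b : R) n : Gaux b n = Gpoly b n.
Proof. by elim: n => //= n ->. Qed.

Lemma lead_coef_Gpoly (A : idomainType) (b : A) n : b != 1 ->
  size (Gpoly b n) = n.+1 /\ lead_coef (Gpoly b n) = - (b - 1) ^+ n.
Proof.
move=> b1; have [Gs Gc] := Gpoly_size_coef b n.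
have nz : (Gpoly b n)`_n != 0 by rewrite Gc oppr_eq0 expf_neq0 // subr_eq0.
have Gsz : size (Gpoly b n) = n.+1.
  apply/eqP; rewrite eqn_leq Gs ltnNge.
  by apply: contra nz => /leq_sizeP/(_ n (leqnn n)) ->.
by rewrite lead_coefE Gsz.
Qed.

(* b |-> G_(n+1)(-1, b); it is -(-2)^n E_n(b), with E_n the n-th Euler polynomial. *)
Definition Gneg1 (A : comNzRingType) n : {poly A} := (Gpoly 'X n).[-1].

Section ValueAtMinusOne.
Variable A : comNzRingType.

Lemma horner_Gneg1 (b : A) n : (Gneg1 A n).[b] = (Gpoly b n).[-1].
Proof.
have := horner_map (horner_eval b) (Gpoly 'X n) (-1).
by rewrite map_Gpoly /= !horner_evalE hornerX hornerN hornerC => ->.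
Qed.

Lemma Gneg1_comp (q : {poly A}) n : Gneg1 A n \Po q = (Gpoly q n).[-1].
Proof.
have := horner_map (comp_poly q) (Gpoly 'X n) (-1).
by rewrite map_Gpoly /= comp_polyX rmorphN1.
Qed.

Lemma Gneg1_shift n :
  Gneg1 A n + (Gneg1 A n \Po ('X + 1)) = ((-2) ^+ n.+1)%:P * 'X^n.
Proof.
rewrite Gneg1_comp /Gneg1.
have := congr1 (horner^~ (-1)) (Gpoly_shift ('X : {poly A}) n).
rewrite /= !hornerE rmorphXn rmorphN rmorph_nat.
move: (Gpoly 'X n).[-1] (Gpoly ('X + 1) n).[-1] => g1 g2 h.
have -> : g2 = - (-1 * g2) by ring.
by rewrite h subKr mulrC -opprD.
Qed.

End ValueAtMinusOne.

Section EulerPolynomial.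
Variable R : numDomainType.
Local Notation E := (Gneg1 R).

Lemma antiperiodic_poly_eq0 (p : {poly R}) : p + (p \Po ('X + 1)) = 0 -> p = 0.
Proof.
move/eqP; rewrite addrC addr_eq0 => /eqP hp.
have : lead_coef p = - lead_coef p.
  rewrite -lead_coefN -hp -polyC1 lead_coef_comp ?size_XaddC //.
  by rewrite lead_coefXaddC expr1n mulr1.
by move/eqP; rewrite eq_sym eqNr lead_coef_eq0 => /eqP.
Qed.

Lemma Gneg1_deriv n : (E n.+1)^`() = (-2 * n.+1%:R) *: E n.
Proof.
apply/eqP; rewrite -subr_eq0; apply/eqP; apply: antiperiodic_poly_eq0.
have := congr1 deriv (Gneg1_shift R n.+1).
rewrite derivD deriv_comp derivD derivX (derivC 1 : 1^`() = 0) addr0 mulr1 derivM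
  derivC mul0r add0r derivXn /= => h.
rewrite comp_polyB comp_polyZ addrACA -opprD -scalerDr h Gneg1_shift.
rewrite !mul_polyC -scaler_nat !scalerA -scalerBl.
by rewrite [X in X *: _](_ : _ = 0) ?scale0r // exprS; ring.
Qed.

Lemma Gneg1_reflect n : E n \Po (1 - 'X) = (-1) ^+ n *: E n.
Proof.
apply/eqP; rewrite -subr_eq0; apply/eqP; apply: antiperiodic_poly_eq0.
have h1 : (1 - 'X) \Po ('X + 1) = - 'X :> {poly R}.
  by rewrite comp_polyB comp_polyX rmorph1 opprD addrCA subrr addr0.
have h2 : 1 - 'X = ('X + 1) \Po (- 'X) :> {poly R}.
  by rewrite comp_polyD comp_polyX rmorph1 addrC.
rewrite comp_polyB comp_polyZ -comp_polyA h1 {1}h2 comp_polyA.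
set F := E n \Po ('X + 1).
have -> : (F \Po - 'X) - (-1) ^+ n *: E n + ((E n \Po - 'X) - (-1) ^+ n *: F)
    = ((E n + F) \Po - 'X) - (-1) ^+ n *: (E n + F).
  by rewrite comp_polyD scalerDr; ring.
have XnN : 'X^n \Po (- 'X) = (-1) ^+ n * 'X^n :> {poly R}.
  by rewrite rmorphXn /= comp_polyX -[- 'X]mulN1r exprMn.
rewrite Gneg1_shift comp_polyM comp_polyC XnN -mul_polyC rmorph_sign.
by rewrite mulrCA subrr.
Qed.

Lemma Gneg1_root0 n : ~~ odd n -> (0 < n)%N -> root (E n) 0.
Proof.
move=> ev n0; have := congr1 (horner^~ 0) (Gneg1_shift R n).
have := congr1 (horner^~ 1) (Gneg1_reflect n).
rewrite /= !hornerE !horner_comp !hornerE subrr -signr_odd (negbTE ev) expr0n.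
by rewrite (gtn_eqF n0) mul1r mulr0 => <- /eqP; rewrite addr_eq0 eq_sym eqNr.
Qed.

End EulerPolynomial.

Lemma Gneg1_root_half (R : numFieldType) n : odd n -> root (Gneg1 R n) 2^-1.
Proof.
move=> od; have := congr1 (horner^~ 2^-1) (Gneg1_reflect R n).
have half : 1 - 2^-1 = 2^-1 :> R by field.
rewrite /= horner_comp !hornerE half -signr_odd od expr1 mulN1r /root => /eqP.
by rewrite eq_sym eqNr.
Qed.

Lemma Gneg1_sign_lt_half (R : rcfType) n x :
  0 < x < 2^-1 -> 0 < (-1) ^+ (n./2).+1 * (Gneg1 R n).[x].
Proof.
elim: n x => [|n IH] x /andP [x0 x1].
  by rewrite /Gneg1 /= !hornerE expr1 mulN1r opprK ltr01.
have E' c : (Gneg1 R n.+1)^`().[c] = -2 * n.+1%:R * (Gneg1 R n).[c].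
  by rewrite Gneg1_deriv hornerZ.
rewrite (_ : n.+1./2 = uphalf n) // uphalf_half; case ev : (odd n) => /=.
- have [c] := poly_mvt (Gneg1 R n.+1) x0; rewrite in_itv /= => /andP [c0 cx].
  have /eqP -> : root (Gneg1 R n.+1) 0 by apply: Gneg1_root0; rewrite /= ?ev.
  rewrite !subr0 E' => ->.
  have := IH c; rewrite c0 (lt_trans cx x1) => /(_ isT) hc.
  have -> : (-1) ^+ (1 + n./2).+1 * (-2 * n.+1%:R * (Gneg1 R n).[c] * x) =
      2 * n.+1%:R * x * ((-1) ^+ (n./2).+1 * (Gneg1 R n).[c]) by rewrite exprS; ring.
  by apply: mulr_gt0 => //; rewrite !mulr_gt0 ?ltr0n.
- have [d] := poly_mvt (Gneg1 R n.+1) x1; rewrite in_itv /= => /andP [xd d1].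
  have /eqP -> : root (Gneg1 R n.+1) 2^-1 by apply: Gneg1_root_half; rewrite /= ev.
  rewrite sub0r E' => /(canRL (@opprK _)) ->.
  have := IH d; rewrite d1 (lt_trans x0 xd) => /(_ isT) hd.
  have -> : (-1) ^+ (0 + n./2).+1 * - (-2 * n.+1%:R * (Gneg1 R n).[d] * (2^-1 - x))
      = 2 * n.+1%:R * (2^-1 - x) * ((-1) ^+ (n./2).+1 * (Gneg1 R n).[d]) by ring.
  by apply: mulr_gt0 => //; rewrite !mulr_gt0 ?ltr0n ?subr_gt0.
Qed.

Lemma Gneg1_sign_gt_half (R : rcfType) n x :
  2^-1 < x < 1 -> 0 < (-1) ^+ (n.+1 + n./2) * (Gneg1 R n).[x].
Proof.
move=> /andP [x1 x2].
have : 0 < 1 - x < 2^-1.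
  by rewrite subr_gt0 x2 /= ltrBlDr -ltrBlDl (_ : 1 - 2^-1 = 2^-1) //; field.
move/(Gneg1_sign_lt_half n); have := congr1 (horner^~ x) (Gneg1_reflect R n).
by rewrite /= horner_comp !hornerE => ->; rewrite mulrA -exprD addSnnS addnC.
Qed.

Lemma horner_prodXsubC (A : comNzRingType) (s : seq A) y :
  (\prod_(z <- s) ('X - z%:P)).[y] = \prod_(z <- s) (y - z).
Proof. by rewrite horner_prod; apply: eq_bigr => z _; rewrite hornerXsubC. Qed.

Lemma deriv_prodXsubC_at (A : comNzRingType) (s1 s2 : seq A) y :
  (\prod_(z <- s1 ++ y :: s2) ('X - z%:P))^`().[y] = \prod_(z <- s1 ++ s2) (y - z).
Proof.
rewrite !big_cat big_cons /= mulrCA derivM derivXsubC mul1r hornerD !hornerM.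
by rewrite hornerXsubC subrr mul0r addr0 !horner_prodXsubC.
Qed.

Lemma notin_uniq_cat_cons (T : eqType) (s1 s2 : seq T) x :
  uniq (s1 ++ x :: s2) -> x \notin s1 ++ s2.
Proof.
move=> u; have : uniq (x :: s1 ++ s2).
  by rewrite (perm_uniq (_ : perm_eq _ (s1 ++ x :: s2))) // -cat1s perm_catCA.
by case/andP.
Qed.

Lemma deriv_prodXsubC_neq0 (A : idomainType) (s : seq A) x : uniq s -> x \in s ->
  (\prod_(z <- s) ('X - z%:P))^`().[x] != 0.
Proof.
move=> + xs; case/splitPr: xs => s1 s2 /notin_uniq_cat_cons nx.
rewrite deriv_prodXsubC_at prodf_seq_neq0; apply/allP => z zs /=.
by rewrite subr_eq0; apply: contraNneq nx => ->.
Qed.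

Lemma factor_all_but_one_root (F : fieldType) (p : {poly F}) xs :
  size p = (size xs).+2 -> all (root p) xs -> uniq xs ->
  exists x0, p = lead_coef p *: \prod_(z <- x0 :: xs) ('X - z%:P).
Proof.
move=> sp rxs uxs; have [q pq] := uniq_roots_prod_XsubC rxs (etrans (uniq_rootsE _) uxs).
have q0 : q != 0 by apply/eqP => q0; move: sp; rewrite pq q0 mul0r size_poly0.
have sq : size q = 2.
  move: sp; rewrite pq size_Mmonic ?monic_prod_XsubC // size_prod_XsubC addnS /=.
  by rewrite -addn2 addnC => /addnI.
have [x0 /factor_theorem [r qr]] := poly2_root sq.
have r0 : r != 0 by apply/eqP => r0; move: q0; rewrite qr r0 mul0r eqxx.
have /size1_polyC r1 : (size r <= 1)%N.
  by have := size_Mmonic r0 (monicXsubC x0); rewrite -qr sq size_XsubC addn2 /=; lia.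
exists x0; suff [c ->] : exists c, p = c *: \prod_(z <- x0 :: xs) ('X - z%:P).
  by rewrite lead_coefZ lead_coef_prod_XsubC mulr1.
by exists r`_0; rewrite pq qr {1}r1 big_cons -mulrA mul_polyC.
Qed.

Lemma signr_mod2 (R : pzRingType) (i j : nat) :
  i = j %[mod 2] -> (-1) ^+ i = (-1) ^+ j :> R.
Proof. by move=> h; rewrite -signr_odd -[RHS]signr_odd -!modn2 h. Qed.

Section SignsAndCounts.
Variable R : realDomainType.
Implicit Types (a c d y : R) (s t u v xs : seq R).

Lemma signr_odd_eq (i j : nat) (x : R) :
  0 < (-1) ^+ i * x -> 0 < (-1) ^+ j * x -> odd i = odd j.
Proof.
rewrite -(signr_odd _ i) -(signr_odd _ j).
by case: (odd i); case: (odd j) => //=; rewrite ?expr1 ?expr0 => h1 h2; lra.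
Qed.

Lemma prod_sub_sign s y : y \notin s ->
  0 < (-1) ^+ count (fun z => y < z) s * \prod_(z <- s) (y - z).
Proof.
elim: s => [|z s IH]; first by rewrite big_nil expr0 mul1r ltr01.
rewrite in_cons negb_or big_cons /= => /andP [yz /IH].
move: (count _ s) (\prod_(z <- s) (y - z)) => k P.
case: ltrgtP yz => // [yz|zy] _ h.
- have -> : (-1) ^+ (1 + k) * ((y - z) * P) = (z - y) * ((-1) ^+ k * P).
    by rewrite add1n exprS; ring.
  by rewrite mulr_gt0 // subr_gt0.
- have -> : (-1) ^+ (0 + k) * ((y - z) * P) = (y - z) * ((-1) ^+ k * P).
    by rewrite add0n; ring.
  by rewrite mulr_gt0 // subr_gt0.
Qed.

Lemma count_gt_path c s : path <%R c s -> count (fun z : R => (c < z)%R) s = size s.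
Proof. by move=> /(order_path_min lt_trans) cs; apply/eqP; rewrite -all_count. Qed.

Lemma count_gt_all2 c u v : all2 <%R u v ->
  (count (fun z : R => (c < z)%R) u <= count (fun z : R => (c < z)%R) v)%N.
Proof.
elim: u v => [|x u IH] [|y v] //= /andP [xy /IH uv].
by apply: leq_add uv; case: (ltrP c x) => // /lt_trans/(_ xy) ->.
Qed.

Lemma count_gt_lt c s : c \notin s ->
  (count (fun z : R => (c < z)%R) s + count (fun z : R => (z < c)%R) s = size s)%N.
Proof.
elim: s => [|z s IH] //=; rewrite in_cons negb_or => /andP [cz /IH <-].
by case: ltrgtP cz => //= *; rewrite addnCA.
Qed.

Lemma count_gt_interlace c d x0 a s t xs : c < d -> rcons s d = a :: t ->
  x0 < a -> all2 <%R s xs -> all2 <%R xs t ->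
  (count (fun z : R => (c < z)%R) s <= count (fun z : R => (c < z)%R) (x0 :: xs)
    <= (count (fun z : R => (c < z)%R) s).+1)%N.
Proof.
move=> cd Est x0a /(count_gt_all2 c) sxs /(count_gt_all2 c) xst.
have := congr1 (count (fun z : R => (c < z)%R)) Est; rewrite -cats1 count_cat /= cd.
have : ((c < x0)%R <= (c < a)%R)%N by case: ltrP => // /lt_trans/(_ x0a) ->.
by rewrite /=; move: (c < x0)%R (c < a)%R => [] [] /= *; lia.
Qed.

Lemma all2_lt_bound d u v : all2 <%R u v -> all (fun y => y <= d) v ->
  all (fun x => x < d) u.
Proof.
elim: u v => [|x u IH] [|y v] //= /andP [xy /IH uv] /andP [yd /uv ->].
by rewrite (lt_le_trans xy yd).
Qed.

Lemma interlace_path a t xs :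
  all2 <%R (belast a t) xs -> all2 <%R xs t -> path <%R a xs.
Proof.
elim: t a xs => [|y t IH] a [|x xs] //= /andP [ax bxs] /andP [xy xst].
by rewrite ax (path_le lt_trans xy (IH y xs bxs xst)).
Qed.

Lemma sorted_rcons_lt s d : sorted <%R s -> all (fun z => z < d) s ->
  sorted <%R (rcons s d).
Proof.
move=> ss sd; rewrite (sorted_pairwise lt_trans) pairwise_rcons.
by rewrite -(sorted_pairwise lt_trans) ss andbT.
Qed.

Lemma extra_root_lt (c c' x0 : R) a xs : 0 < c * c' -> path <%R a xs ->
  0 < c' * (-1) ^+ size xs * (c *: \prod_(z <- x0 :: xs) ('X - z%:P)).[a] -> x0 < a.
Proof.
move=> cc' pax; rewrite hornerZ horner_prodXsubC big_cons.
have nxs : a \notin xs.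
  by apply/negP => /(allP (order_path_min lt_trans pax)); rewrite ltxx.
have := prod_sub_sign nxs; rewrite count_gt_path //.
move: (\prod_(z <- xs) (a - z)) ((-1) ^+ size xs) => P sg hP.
have -> : c' * sg * (c * ((a - x0) * P)) = c * c' * (sg * P) * (a - x0) by ring.
by rewrite pmulr_rgt0 ?subr_gt0 // mulr_gt0.
Qed.
End SignsAndCounts.

Section SignChanges.
Variable R : rcfType.

Lemma sign_changes_path (p : {poly R}) k a t : path <%R a t ->
  {in a :: t, forall y,
    0 < k * (-1) ^+ count (fun z : R => (y < z)%R) (a :: t) * p.[y]} ->
  path (fun x y => (x < y) && (p.[x] * p.[y] < 0)) a t.
Proof.
elim: t a => [//|y t IH] a pat sg; have /= /andP [ay yt] := pat.
have sa := sg a (mem_head _ _).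
have := sg y; rewrite !inE eqxx orbT => /(_ isT) sy.
rewrite /= ltxx ay /= add0n add1n exprS (count_gt_path (path_le lt_trans ay yt)) in sa.
rewrite /= (lt_gtF ay) ltxx /= add0n count_gt_path // in sy.
rewrite /= ay /=; apply/andP; split.
  set w := k * (-1) ^+ size t.
  have sa' : 0 < - w * p.[a].
    by have -> : - w * p.[a] = k * (-1 * (-1) ^+ size t) * p.[a] by rewrite /w; ring.
  rewrite ltNge; apply/negP => H.
  have := mulr_ge0 (sqr_ge0 w) H; have := mulr_gt0 sa' sy.
  have -> : - w * p.[a] * (w * p.[y]) = - (w ^+ 2 * (p.[a] * p.[y])) by ring.
  by rewrite oppr_gt0 => /lt_le_trans h /h; rewrite ltxx.
apply: IH => // z zt; have := sg z; rewrite inE zt orbT => /(_ isT).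
have az : a < z by move: (order_path_min lt_trans pat) => /allP/(_ z zt).
by rewrite /= (lt_gtF az) add0n.
Qed.

Lemma roots_between_sign_changes (p : {poly R}) a t :
  path (fun x y => (x < y) && (p.[x] * p.[y] < 0)) a t ->
  exists2 xs, all (root p) xs & all2 <%R (belast a t) xs && all2 <%R xs t.
Proof.
elim: t a => [|y t IH] a /=; first by exists [::].
case/andP => /andP [ay pay] /IH [xs rxs /andP [bxs xst]].
have [x] := poly_ivtoo (ltW ay) pay; rewrite in_itv /= => /andP [ax xy] rx.
by exists (x :: xs); rewrite /= ?rx ?ax ?xy ?bxs ?xst.
Qed.

End SignChanges.

Section RealRoots.
Variable R : rcfType.
Implicit Types (b k : R) (s : seq R).

Lemma GpolyS_sign_nodes b n k s : 0 < b -> k != 0 -> sorted <%R s ->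
  all (fun z => z < 0) s -> Gpoly b n = k *: \prod_(z <- s) ('X - z%:P) ->
  {in rcons s 0, forall y,
    0 < - k * (-1) ^+ count (fun z : R => (y < z)%R) (rcons s 0) * (Gpoly b n.+1).[y]}.
Proof.
move=> b0 k0 ss sn Gn y; have k2 : 0 < k ^+ 2 by rewrite exprn_even_gt0 //= k0 orbT.
rewrite -cats1 count_cat [count _ [:: 0]]/= addn0 mem_cat inE orbC.
case/orP => [/eqP -> | ys].
- have n0 : (0 : R) \notin s by apply/negP => /(allP sn); rewrite ltxx.
  have c0 : count (fun z : R => (0 < z)%R) s = 0%N.
    by rewrite (eq_in_count (a2 := pred0)) ?count_pred0 // => z /(allP sn)/lt_gtF.
  have := prod_sub_sign n0; rewrite c0 ltxx addn0 expr0 mul1r => P0.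
  rewrite horner_GpolyS0 Gn hornerZ horner_prodXsubC.
  have -> : - k * 1 * (- b * (k * \prod_(z <- s) (0 - z))) =
      b * k ^+ 2 * \prod_(z <- s) (0 - z) by ring.
  by apply: mulr_gt0 => //; apply: mulr_gt0.
- have y0 : y < 0 := allP sn y ys; rewrite y0 addn1.
  have ry : root (Gpoly b n) y by rewrite Gn rootZ // root_prod_XsubC.
  case/splitPr: ys ss Gn => s1 s2 ss Gn.
  have ny := notin_uniq_cat_cons (lt_sorted_uniq ss).
  have Ps := prod_sub_sign ny.
  rewrite count_cat [count _ (_ :: _)]/= ltxx add0n -count_cat.
  rewrite horner_GpolyS_root // Gn derivZ hornerZ deriv_prodXsubC_at.
  move: (count _ _) (\prod_(z <- s1 ++ s2) (y - z)) Ps => c P Ps.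
  have -> : - k * (-1) ^+ c.+1 * (y * (y - 1) * (k * P)) =
      k ^+ 2 * (y * (y - 1)) * ((-1) ^+ c * P) by rewrite exprS; ring.
  by apply: mulr_gt0 => //; apply: mulr_gt0 => //; nra.
Qed.

Lemma Gpoly_roots_step b n s : 0 < b < 1 -> sorted <%R s ->
  all (fun z => z < 0) s -> Gpoly b n = - (b - 1) ^+ n *: \prod_(z <- s) ('X - z%:P) ->
  exists s', [/\ sorted <%R s', all (fun z => z < 0) s',
    Gpoly b n.+1 = - (b - 1) ^+ n.+1 *: \prod_(z <- s') ('X - z%:P) &
    forall c, c < 0 ->
      (count (fun z : R => (c < z)%R) s <= count (fun z : R => (c < z)%R) s'
         <= (count (fun z : R => (c < z)%R) s).+1)%N].
Proof.
move=> /andP [b0 b1] ss sn Gn; have b1' : b != 1 by rewrite lt_eqF.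
set k := - (b - 1) ^+ n in Gn; have k0 : k != 0 by rewrite oppr_eq0 expf_neq0 // subr_eq0.
have signs := GpolyS_sign_nodes b0 k0 ss sn Gn.
have sL := sorted_rcons_lt ss sn.
have nonpos : all (fun z => z <= 0) (rcons s 0).
  by rewrite all_rcons lexx; apply/allP => z /(allP sn)/ltW.
have sz : size s = n.
  have [+ _] := lead_coef_Gpoly n b1'.
  by rewrite Gn size_scale // size_prod_XsubC => -[].
case Ert : (rcons s 0) signs sL nonpos => [|a t]; first by case: (s) Ert.
move=> signs pat /andP [a0 t0].
have Es : belast a t = s by have := lastI a t; rewrite -Ert => /rcons_inj [].
have [xs rxs /andP [sxs xst]] := roots_between_sign_changes (sign_changes_path pat signs).
have pax := interlace_path sxs xst; rewrite Es in sxs.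
have szx : size xs = n by move: sxs; rewrite all2E sz => /andP [/eqP].
have [Gs Gl] := lead_coef_Gpoly n.+1 b1'.
have [x0 Gx0] : exists x0, Gpoly b n.+1 =
    - (b - 1) ^+ n.+1 *: \prod_(z <- x0 :: xs) ('X - z%:P).
  rewrite -Gl; apply: factor_all_but_one_root => //; first by rewrite Gs szx.
  exact: lt_sorted_uniq (path_sorted pax).
have x0a : x0 < a.
  have := signs a (mem_head _ _); rewrite [count _ _]/= ltxx add0n count_gt_path //.
  have -> : size t = size xs by move: (congr1 size Ert); rewrite size_rcons sz szx => -[].
  rewrite Gx0; apply: extra_root_lt _ pax.
  have -> : - (b - 1) ^+ n.+1 * - k = (1 - b) * ((b - 1) ^+ n) ^+ 2.
    by rewrite /k exprS; ring.
  by rewrite mulr_gt0 ?subr_gt0 // exprn_even_gt0 //= expf_neq0 ?orbT // subr_eq0.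
exists (x0 :: xs); split => //.
- by rewrite /= (path_le lt_trans x0a pax).
- by rewrite /= (lt_le_trans x0a a0) (all2_lt_bound xst t0).
- by move=> c c0; apply: count_gt_interlace c0 Ert x0a sxs xst.
Qed.

End RealRoots.

Section ZerosInTheDisc.
Variable R : rcfType.
Implicit Types (b : R) (s : seq R).

(* The number of zeros of [Gpoly b n] in (-1, 0). *)
Definition count_inside b n : nat := if b < 2^-1 then n.+1./2 else n./2.

Lemma Gpoly_sign_at_m1 b n : 0 < b < 1 -> b != 2^-1 ->
  0 < (-1) ^+ (n.+1 + count_inside b n) * (Gpoly b n).[-1].
Proof.
move=> /andP [b0 b1] bh; rewrite -horner_Gneg1 /count_inside.
case: (ltP b 2^-1) => hb.
  rewrite (@signr_mod2 _ _ (n./2).+1); last by lia.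
  by apply: Gneg1_sign_lt_half; rewrite b0 hb.
by apply: Gneg1_sign_gt_half; rewrite b1 andbT lt_neqAle eq_sym bh hb.
Qed.

Lemma Gpoly_count_parity b n s : 0 < b < 1 -> b != 2^-1 ->
  Gpoly b n = - (b - 1) ^+ n *: \prod_(z <- s) ('X - z%:P) ->
  -1 \notin s /\ odd (count (fun z : R => (-1 < z)%R) s) = odd (count_inside b n).
Proof.
move=> hb bh Gn; have := Gpoly_sign_at_m1 n hb bh.
rewrite Gn hornerZ horner_prodXsubC => hs.
have nin : -1 \notin s.
  by apply/negP => m1s; move: hs; rewrite (big_rem _ m1s) /= subrr mul0r !mulr0 ltxx.
split=> //; have hP := prod_sub_sign nin.
have pos : 0 < (-1) ^+ n.+1 * - (b - 1) ^+ n.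
  rewrite exprS mulN1r mulrNN -exprMn mulN1r opprB exprn_gt0 // subr_gt0.
  by case/andP: hb.
apply/(@addbI (odd n.+1)); rewrite -!oddD; apply: signr_odd_eq hs.
by have := mulr_gt0 pos hP; rewrite exprD; congr (0 < _); ring.
Qed.

Lemma Gpoly_real_roots b n : 0 < b < 1 -> exists s,
  [/\ sorted <%R s, all (fun z => z < 0) s,
      Gpoly b n = - (b - 1) ^+ n *: \prod_(z <- s) ('X - z%:P) &
      b != 2^-1 -> count (fun z : R => (-1 < z)%R) s = count_inside b n].
Proof.
move=> hb; elim: n => [|n [s [ss sn Gn cnt]]].
  exists [::]; split => //; first by rewrite big_nil expr0 scaleN1r.
  by rewrite /count_inside; case: ifP.
have [s' [ss' sn' Gn' cnt']] := Gpoly_roots_step hb ss sn Gn.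
exists s'; split => // bh; have [_ /(congr1 nat_of_bool)] := Gpoly_count_parity hb bh Gn'.
have := cnt' (-1) (ltrN10 R); rewrite cnt // -!modn2 /count_inside.
by case: ifP => _; set c := count _ s'; lia.
Qed.

End ZerosInTheDisc.

Section ComplexZeros.
Variable R : realType.
Local Notation toC := (real_complex R).
Implicit Types (b k : R) (s : seq R).

Lemma normc_real (x : R) : `|toC x| = toC `|x|.
Proof. by rewrite normc_def /= expr0n /= addr0 sqrtr_sqr. Qed.

Lemma GC_factor m b k s : Gpoly b m.-1 = k *: \prod_(z <- s) ('X - z%:P) ->
  GC m b = toC k *: \prod_(w <- map toC s) ('X - w%:P).
Proof.
rewrite /GC /G Gaux_Gpoly => ->; rewrite map_polyZ rmorph_prod big_map.
by congr (_ *: _); apply: eq_bigr => z _; apply: map_polyXsubC.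
Qed.

Lemma nzeros_count (p : {poly R[i]}) s (P : pred R) (Q : pred R[i]) :
  uniq s -> (forall z, root p z = (z \in map toC s)) ->
  {in s, forall x, Q (toC x) = P x} -> nzeros p Q (count P s).
Proof.
move=> us rp PQ; exists (map toC (filter P s)); split.
- by rewrite map_inj_uniq ?filter_uniq //; apply: complexI.
- move=> z; rewrite rp; apply/idP/idP.
    by case/mapP => x; rewrite mem_filter => /andP [Px xs] ->; rewrite map_f // PQ.
  by case/andP => /mapP [x xs ->] Qx; rewrite map_f // mem_filter -PQ ?Qx.
- by rewrite size_map size_filter.
Qed.

Lemma root_GC m b s : 0 < b < 1 ->
  Gpoly b m.-1 = - (b - 1) ^+ m.-1 *: \prod_(z <- s) ('X - z%:P) ->
  forall z, root (GC m b) z = (z \in map toC s).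
Proof.
case/andP=> _ /lt_eqF/negbT b1 Gn z; have k0 : - (b - 1) ^+ m.-1 != 0.
  by rewrite oppr_eq0 expf_neq0 // subr_eq0.
by rewrite (GC_factor Gn) rootZ ?fmorph_eq0 // root_prod_XsubC.
Qed.

Lemma GC_simple_negative_roots m b : 0 < b < 1 -> forall z, root (GC m b) z ->
  ~~ root (GC m b)^`() z /\ exists x, x < 0 /\ z = toC x.
Proof.
move=> hb; have [s [ss sn Gn _]] := Gpoly_real_roots m.-1 hb.
move=> z; rewrite (root_GC hb Gn) => /mapP [x xs ->].
split; last by exists x; rewrite (allP sn).
have b1 : b != 1 by case/andP: hb => _ /lt_eqF->.
rewrite /GC /G Gaux_Gpoly deriv_map /root horner_map fmorph_eq0 Gn derivZ hornerZ.
rewrite mulf_neq0 ?oppr_eq0 ?expf_neq0 ?subr_eq0 //.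
exact: deriv_prodXsubC_neq0 (lt_sorted_uniq ss) xs.
Qed.

Lemma GC_zero_counts m b : 0 < b < 1 -> b != 2^-1 ->
  nzeros (GC m b) (fun z => `|z| < 1) (count_inside b m.-1) /\
  nzeros (GC m b) (fun z => `|z| > 1) (m.-1 - count_inside b m.-1)%N.
Proof.
move=> hb bh; have [s [ss sn Gn /(_ bh) cnt]] := Gpoly_real_roots m.-1 hb.
have [nin _] := Gpoly_count_parity hb bh Gn.
have b1 : b != 1 by case/andP: hb => _ /lt_eqF->.
have sz : size s = m.-1.
  have [+ _] := lead_coef_Gpoly m.-1 b1.
  by rewrite Gn size_scale ?oppr_eq0 ?expf_neq0 ?subr_eq0 // size_prod_XsubC => -[].
have us := lt_sorted_uniq ss; have rG := root_GC hb Gn.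
have normx x : x \in s -> `|toC x| = toC (- x).
  by move=> /(allP sn) x0; rewrite normc_real ltr0_norm.
split.
  rewrite -cnt; apply: nzeros_count us rG _ => x xs.
  by rewrite normx // (_ : 1 = toC 1) // ltcR ltrNl.
have := count_gt_lt nin; rewrite cnt sz => cnt'.
rewrite (_ : (m.-1 - _)%N = count (fun z : R => (z < -1)%R) s); last first.
  by move: cnt'; set k := count_inside _ _ => <-; rewrite addKn.
apply: nzeros_count us rG _ => x xs.
by rewrite normx // (_ : 1 = toC 1) // ltcR ltrNr.
Qed.

End ComplexZeros.

Theorem theorem4p7 (R : realType) (m : nat) (hm : (2 <= m)%N) :
  (* (i) *)
  (forall b : R, 0 < b < 1 ->
     forall z : R[i], root (GC m b) z ->
       ~~ root (GC m b)^`() z /\ exists x : R, x < 0 /\ z = real_complex R x)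
  /\
  (* (ii) *)
  (forall b : R, 0 < b < 2^-1 ->
     nzeros (GC m b) (fun z => `|z| < 1) m./2 /\
     nzeros (GC m b) (fun z => `|z| > 1) m.-1./2)
  /\
  (* (iii) *)
  (forall b : R, 2^-1 < b < 1 ->
     nzeros (GC m b) (fun z => `|z| < 1) m.-1./2 /\
     nzeros (GC m b) (fun z => `|z| > 1) m./2).
Proof.
have half_lt1 : 2^-1 < 1 :> R by rewrite invf_lt1 // ltr1n.
have Sm : m.-1.+1 = m by rewrite prednK // ltnW.
split; [|split].
- exact: GC_simple_negative_roots.
- move=> b /andP [b0 bh]; have hb : 0 < b < 1 by rewrite b0 (lt_trans bh).
  have := GC_zero_counts m hb (negbT (lt_eqF bh)); rewrite /count_inside bh Sm.
  by rewrite (_ : (m.-1 - m./2)%N = m.-1./2) //; lia.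
- move=> b /andP [hb b1].
  have hb' : 0 < b < 1 by rewrite b1 andbT (lt_trans _ hb) // invr_gt0 ltr0n.
  have := GC_zero_counts m hb' (negbT (gt_eqF hb)).
  rewrite /count_inside ltNge (ltW hb) /=.
  by rewrite (_ : (m.-1 - m.-1./2)%N = m./2) //; lia.
Qed.
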